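(* Let $W(D_4)\subset\mathrm{O}_4(\mathbb R)$ be the group of matrices $D\cdot P(\pi)$ with $D=\mathrm{diag}(\varepsilon_1,\dots,\varepsilon_4)$, $\varepsilon_i=\pm1$, $\prod\varepsilon_i=1$, $P(\pi)$ the permutation matrix of $\pi\in\mathfrak S_4$, let $$\rho=\tfrac12\begin{pmatrix}-1&1&1&1\\-1&-1&1&-1\\-1&-1&-1&1\\-1&1&-1&-1\end{pmatrix},$$ and let $\tilde\rho$ be the automorphism $x\mapsto\rho x\rho^{-1}$ of $W(D_4)$. Then $\mathrm{Fix}(\tilde\rho)=\{x\in W(D_4)\mid\rho x\rho^{-1}=x\}$ is isomorphic to the group $\mathbb H^1$ of Hurwitz integral quaternions of norm $1$, a group of order $24$ isomorphic to $\mathfrak Q_8\rtimes\mathfrak C_3$, and this group is isomorphic to the double covering $\tilde{\mathfrak A}_4$ of $\mathfrak A_4$.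
   Context: $\mathbb H^1=\{\pm1,\pm i,\pm j,\pm k\}\cup\{\tfrac12(\pm1\pm i\pm j\pm k)\}$ inside the real quaternions; $\mathfrak Q_8$ is the quaternion group of order $8$, $\mathfrak C_3$ the cyclic group of order $3$ acting by conjugation with $-\tfrac12(1+i+j+k)$, and $\tilde{\mathfrak A}_4$ is the binary tetrahedral group (the nonsplit central extension of $\mathfrak A_4$ by a group of order $2$). *)

From HB Require Import structures.
From mathcomp Require Import all_boot all_order all_algebra all_fingroup all_solvable.
From mathcomp Require Import alt.
Set Implicit Arguments. Unset Strict Implicit. Unset Printing Implicit Defensive.
Import Order.TTheory GRing.Theory Num.Theory.
Local Open Scope ring_scope.

Definition iso_on {A B : Type} (GA : A -> Prop) (mA : A -> A -> A)
  (GB : B -> Prop) (mB : B -> B -> B) : Prop :=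
  exists f : A -> B,
    [/\ forall x, GA x -> GB (f x),
        forall x y, GA x -> GA y -> f x = f y -> x = y,
        forall y, GB y -> exists2 x, GA x & f x = y
      & forall x y, GA x -> GA y -> f (mA x y) = mB (f x) (f y)].

Definition WD4 (x : 'M[rat]_4) : Prop :=
  exists (e : 'I_4 -> rat) (s : 'S_4),
    [/\ forall i, e i = 1 \/ e i = -1,
        \prod_(i < 4) e i = 1
      & x = diag_mx (\row_i e i) *m perm_mx s].

Definition rho_rows : seq (seq rat) :=
  [:: [:: -1;  1;  1;  1];
      [:: -1; -1;  1; -1];
      [:: -1; -1; -1;  1];
      [:: -1;  1; -1; -1]].

Definition rho : 'M[rat]_4 :=
  \matrix_(i < 4, j < 4) (nth 0 (nth [::] rho_rows i) j / 2).

Definition FixRho (x : 'M[rat]_4) : Prop :=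
  WD4 x /\ rho *m x *m invmx rho = x.

(* (a, b, c, d) stands for a + b i + c j + d k *)
Definition quat := (rat * rat * rat * rat)%type.
Definition qa (q : quat) := q.1.1.1.
Definition qb (q : quat) := q.1.1.2.
Definition qc (q : quat) := q.1.2.
Definition qd (q : quat) := q.2.
Definition Q (a b c d : rat) : quat := (a, b, c, d).

Definition qmul (p q : quat) : quat :=
  Q (qa p * qa q - qb p * qb q - qc p * qc q - qd p * qd q)
    (qa p * qb q + qb p * qa q + qc p * qd q - qd p * qc q)
    (qa p * qc q - qb p * qd q + qc p * qa q + qd p * qb q)
    (qa p * qd q + qb p * qc q - qc p * qb q + qd p * qa q).

Definition qconj (q : quat) : quat := Q (qa q) (- qb q) (- qc q) (- qd q).
Definition qnorm (q : quat) : rat := qa q ^+ 2 + qb q ^+ 2 + qc q ^+ 2 + qd q ^+ 2.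

Definition hurwitz (q : quat) : bool :=
  [&& qa q \is a Num.int, qb q \is a Num.int, qc q \is a Num.int & qd q \is a Num.int]
  || [&& qa q - 1/2 \is a Num.int, qb q - 1/2 \is a Num.int,
         qc q - 1/2 \is a Num.int & qd q - 1/2 \is a Num.int].

Definition H1 (q : quat) : bool := hurwitz q && (qnorm q == 1).

Definition Q8list : seq quat :=
  [:: Q 1 0 0 0; Q (-1) 0 0 0; Q 0 1 0 0; Q 0 (-1) 0 0;
      Q 0 0 1 0; Q 0 0 (-1) 0; Q 0 0 0 1; Q 0 0 0 (-1)].
Definition Q8 (q : quat) : bool := q \in Q8list.

(* omega = -1/2 (1 + i + j + k), of order 3 *)
Definition omega : quat := Q (-(1/2)) (-(1/2)) (-(1/2)) (-(1/2)).
Definition qpow (q : quat) (n : nat) : quat := iter n (qmul q) (Q 1 0 0 0).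

Definition c3act (c : nat) (q : quat) : quat :=
  qmul (qmul (qpow omega c) q) (qconj (qpow omega c)).

(* external semidirect product Q_8 x| C_3, C_3 = Z/3 written additively *)
Definition SD (x : quat * nat) : Prop := Q8 x.1 /\ (x.2 < 3)%N.
Definition sdmul (x y : quat * nat) : quat * nat :=
  (qmul x.1 (c3act x.2 y.1), ((x.2 + y.2) %% 3)%N).

(* ---------- binary tetrahedral group: nonsplit central extension of A_4 by C_2 ---- *)
Definition nonsplit_central_ext_A4 {A : Type} (G : A -> Prop) (m : A -> A -> A) (e : A)
  : Prop :=
  exists pi : A -> {perm 'I_4},
    [/\
        forall x, G x -> pi x \in ('Alt_('I_4))%g,
        forall x y, G x -> G y -> pi (m x y) = (pi x * pi y)%g,
        forall s, s \in ('Alt_('I_4))%g -> exists2 x, G x & pi x = s,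
        (exists z, [/\ G z, z <> e, pi z = 1%g, pi e = 1%g &
           forall x, G x -> pi x = 1%g -> x = e \/ x = z]) /\
        (forall z x, G z -> pi z = 1%g -> G x -> m z x = m x z)
      &
        ~ (exists sec : {perm 'I_4} -> A,
             [/\ forall s, s \in ('Alt_('I_4))%g -> G (sec s),
                 forall s, s \in ('Alt_('I_4))%g -> pi (sec s) = s
               & forall s t, s \in ('Alt_('I_4))%g -> t \in ('Alt_('I_4))%g ->
                   sec (s * t)%g = m (sec s) (sec t)])].

(* In the basis 1, i, j, k of the quaternions, rho is the matrix of left multiplication
   by omega = -(1 + i + j + k)/2.  Hence every map x |-> w x q^* with w a power of omega
   commutes with rho.  For (u, c) in Q_8 x| C_3 the map x |-> omega^c x (u omega^c)^* is
   a signed permutation of even sign, (u, c) |-> u omega^c is an isomorphism onto H^1,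
   and (u, c) |-> [x |-> omega^c x (u omega^c)^*] is one onto Fix(rho~); surjectivity is
   checked against all 192 elements of W(D_4).  Finally H^1 acts by conjugation on the
   four units (1 +- i +- j +- k)/2 with an even number of minus signs, the vertices of a
   tetrahedron: this is an epimorphism onto A_4 with kernel {1, -1}, and it does not split
   because -1 is the only element of order 2 of H^1. *)

From HB Require Import structures.
From mathcomp Require Import all_boot all_order all_algebra all_fingroup all_solvable.
From mathcomp Require Import alt.
From mathcomp Require Import zify ring lra.
From Stdlib Require Import ClassicalEpsilon.
Import Order.TTheory GRing.Theory Num.Theory.
Local Open Scope ring_scope.
Set Implicit Arguments. Unset Strict Implicit. Unset Printing Implicit Defensive.

Section IsoOn.
Variables (A B C : Type).
Variables (GA : A -> Prop) (mA : A -> A -> A).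
Variables (GB : B -> Prop) (mB : B -> B -> B).
Variables (GC : C -> Prop) (mC : C -> C -> C).

Lemma iso_on_trans :
  iso_on GA mA GB mB -> iso_on GB mB GC mC -> iso_on GA mA GC mC.
Proof.
move=> [f [fG finj fsurj fM]] [g [gG ginj gsurj gM]].
exists (g \o f); split=> /=.
- by move=> x /fG /gG.
- by move=> x y Hx Hy /(ginj _ _ (fG _ Hx) (fG _ Hy)) /finj; apply.
- move=> z /gsurj [y /fsurj [x Hx <-] <-].
  by exists x.
- by move=> x y Hx Hy; rewrite fM // gM //; apply: fG.
Qed.

Lemma iso_on_sym : inhabited A -> (forall x y, GA x -> GA y -> GA (mA x y)) ->
  iso_on GA mA GB mB -> iso_on GB mB GA mA.
Proof.
move=> inhA GA_mul [f [fG finj fsurj fM]].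
pose g y := epsilon inhA (fun x => GA x /\ f x = y).
have gK y : GB y -> GA (g y) /\ f (g y) = y.
  move=> /fsurj [x Hx Hfx].
  exact: (epsilon_spec inhA (fun x => GA x /\ f x = y) (ex_intro _ x (conj Hx Hfx))).
exists g; split.
- by move=> y /gK[].
- by move=> y z /gK[_ fy] /gK[_ fz] gyz; rewrite -fy -fz gyz.
- move=> x Hx; exists (f x); first exact: fG.
  by have [Hg fg] := gK _ (fG _ Hx); apply: finj.
- move=> y z /gK[Hy fy] /gK[Hz fz].
  have -> : mB y z = f (mA (g y) (g z)) by rewrite fM // fy fz.
  have [Hg fg] := gK _ (fG _ (GA_mul _ _ Hy Hz)).
  exact: finj _ _ Hg (GA_mul _ _ Hy Hz) fg.
Qed.

Lemma iso_on_mul_closed : (forall x y, GA x -> GA y -> GA (mA x y)) ->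
  iso_on GA mA GB mB -> forall y z, GB y -> GB z -> GB (mB y z).
Proof.
move=> GA_mul [f [fG _ fsurj fM]] _ _ /fsurj[y Hy <-] /fsurj[z Hz <-].
by rewrite -fM //; apply/fG/GA_mul.
Qed.
End IsoOn.

Lemma inj_in_of_uniq_map (T1 T2 : eqType) (f : T1 -> T2) (s : seq T1) :
  uniq (map f s) -> {in s &, injective f}.
Proof.
elim: s => //= x s IHs /andP[fx_notin /IHs injs] y z.
rewrite !inE => /predU1P[-> | ys] /predU1P[-> | zs] // fyz.
- by move: fx_notin; rewrite fyz map_f.
- by move: fx_notin; rewrite -fyz map_f.
- exact: injs.
Qed.


Definition o0 : 'I_4 := @Ordinal 4 0 isT.
Definition o1 : 'I_4 := @Ordinal 4 1 isT.
Definition o2 : 'I_4 := @Ordinal 4 2 isT.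
Definition o3 : 'I_4 := @Ordinal 4 3 isT.
Definition ords : seq 'I_4 := [:: o0; o1; o2; o3].

Lemma mem_ords (i : 'I_4) : i \in ords.
Proof. by case: i => [[|[|[|[|?]]]] ?] //; rewrite !inE -!val_eqE. Qed.

Lemma nth_ords (i : 'I_4) : nth o0 ords i = i.
Proof. by case: i => [[|[|[|[|?]]]] ?] //; apply: val_inj. Qed.

Lemma map_nth_ords (T : Type) (x0 : T) (l : seq T) :
  size l = 4%N -> map (fun i : 'I_4 => nth x0 l i) ords = l.
Proof. by case: l => [|a [|b [|c [|d []]]]]. Qed.

Lemma big_ord4 (R : Type) (idx : R) (op : Monoid.law idx) (F : 'I_4 -> R) :
  \big[op/idx]_(k < 4) F k = op (op (op (F o0) (F o1)) (F o2)) (F o3).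
Proof.
rewrite !big_ord_recl big_ord0 Monoid.mulm1 !Monoid.mulmA.
by congr (op (op (op _ _) _) _); congr F; apply: val_inj.
Qed.

Lemma sum_ord4 (F : 'I_4 -> rat) : \sum_(k < 4) F k = F o0 + F o1 + F o2 + F o3.
Proof. exact: big_ord4. Qed.

Lemma prod_ord4 (F : 'I_4 -> rat) : \prod_(k < 4) F k = F o0 * F o1 * F o2 * F o3.
Proof. exact: big_ord4. Qed.

Definition q1 : quat := Q 1 0 0 0.
Definition qm1 : quat := Q (-1) 0 0 0.

Definition qcoord (i : 'I_4) (q : quat) : rat := nth 0 [:: qa q; qb q; qc q; qd q] i.
Definition qbasis (j : 'I_4) : quat := nth q1 [:: q1; Q 0 1 0 0; Q 0 0 1 0; Q 0 0 0 1] j.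

Ltac quat_ring :=
  cbv [qcoord qbasis qmul qconj qnorm qa qb qc qd Q q1 nth nat_of_ord o0 o1 o2 o3 fst snd];
  try (congr (_, _, _, _)); ring.

Lemma qmulA : associative qmul.
Proof.
by move=> [[[? ?] ?] ?] [[[? ?] ?] ?] [[[? ?] ?] ?]; quat_ring.
Qed.

Lemma qmul1q : left_id q1 qmul.
Proof. by move=> [[[? ?] ?] ?]; quat_ring. Qed.

Lemma qmulq1 : right_id q1 qmul.
Proof. by move=> [[[? ?] ?] ?]; quat_ring. Qed.

Lemma qmul_realC (r : rat) (q : quat) : qmul (Q r 0 0 0) q = qmul q (Q r 0 0 0).
Proof. by move: q => [[[? ?] ?] ?]; quat_ring. Qed.

Lemma qmul_conjq (q : quat) : qmul (qconj q) q = Q (qnorm q) 0 0 0.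
Proof. by move: q => [[[? ?] ?] ?]; quat_ring. Qed.

Lemma qmulq_conj (q : quat) : qmul q (qconj q) = Q (qnorm q) 0 0 0.
Proof. by move: q => [[[? ?] ?] ?]; quat_ring. Qed.

Lemma qnormM (p q : quat) : qnorm (qmul p q) = qnorm p * qnorm q.
Proof. by move: p q => [[[? ?] ?] ?] [[[? ?] ?] ?]; quat_ring. Qed.

Lemma qpowS (q : quat) (n : nat) : qpow q n.+1 = qmul q (qpow q n).
Proof. by []. Qed.

Lemma qpowD (q : quat) (m n : nat) : qpow q (m + n) = qmul (qpow q m) (qpow q n).
Proof. by elim: m => [|m IHm]; rewrite ?qmul1q // addSn !qpowS IHm qmulA. Qed.

Lemma qpowC (q : quat) (n : nat) : qmul q (qpow q n) = qmul (qpow q n) q.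
Proof. by rewrite -qpowS -addn1 qpowD; congr qmul; exact: qmulq1. Qed.

Lemma qnorm_pow (q : quat) (n : nat) : qnorm q = 1 -> qnorm (qpow q n) = 1.
Proof.
move=> nq1; elim: n => [|n IHn]; first by vm_compute.
by rewrite qpowS qnormM nq1 IHn mulr1.
Qed.

Lemma qnorm_omega : qnorm omega = 1.
Proof. by vm_compute. Qed.

Lemma omega_order3 : qpow omega 3 = q1.
Proof. by vm_compute. Qed.

Lemma qpow_omega_mul3 (k : nat) : qpow omega (k * 3) = q1.
Proof. by elim: k => [|k IHk] //; rewrite mulSn qpowD omega_order3 qmul1q. Qed.

Lemma qpow_omega_mod3 (n : nat) : qpow omega (n %% 3) = qpow omega n.
Proof. by rewrite {2}(divn_eq n 3) qpowD qpow_omega_mul3 qmul1q. Qed.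

Lemma qconj_omega_powK (n : nat) : qmul (qconj (qpow omega n)) (qpow omega n) = q1.
Proof. by rewrite qmul_conjq qnorm_pow // qnorm_omega. Qed.

Definition sd_quat (x : quat * nat) : quat := qmul x.1 (qpow omega x.2).

Lemma sd_quatM (x y : quat * nat) : sd_quat (sdmul x y) = qmul (sd_quat x) (sd_quat y).
Proof.
case: x y => [u c] [v d]; rewrite /sd_quat /sdmul /c3act /= qpow_omega_mod3 qpowD !qmulA.
by rewrite -[qmul (qmul _ (qconj _)) _]qmulA qconj_omega_powK qmulq1.
Qed.

Definition half_grid : seq rat := [seq k%:~R / 2 | k <- [:: -2; -1; 0; 1; 2]%R].

Lemma half_int_sqr_le1 (x : rat) :
  (x \is a Num.int) || (x - 1/2 \is a Num.int) -> x ^+ 2 <= 1 -> x \in half_grid.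
Proof.
move=> hx; have [k ->] : exists k : int, x = k%:~R / 2.
  case/orP: hx => [/intrP[m ->]|/intrP[m xm]]; first by exists (2 * m)%R; rewrite intrM; field.
  by exists (2 * m + 1)%R; rewrite -[x](subrK (1/2)) xm intrD intrM; field.
have -> : (k%:~R / 2 : rat) ^+ 2 = (k ^+ 2)%:~R / 4 by rewrite rmorphXn /=; field.
rewrite ler_pdivrMr // mul1r -[4]/(4%:~R) ler_int => k2.
have hk : (-2 <= k <= 2)%R by apply/andP; split; nia.
apply: (map_f (fun k : int => k%:~R / 2 : rat)).
by move: k {k2} hk => [[|[|[|n]]]|[|[|n]]].
Qed.

Definition quat_grid : seq quat :=
  [seq (p, d) | p <- [seq (p, c) | p <- [seq (a, b) | a <- half_grid, b <- half_grid],
                                   c <- half_grid], d <- half_grid].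

Lemma H1_in_grid (q : quat) : H1 q -> q \in quat_grid.
Proof.
move: q => [[[a b] c] d] /andP[hq /eqP nq].
rewrite /qnorm /qa /qb /qc /qd /= in nq hq.
have [ha hb hc hd] : [/\ (a \is a Num.int) || (a - 1/2 \is a Num.int),
    (b \is a Num.int) || (b - 1/2 \is a Num.int),
    (c \is a Num.int) || (c - 1/2 \is a Num.int) &
    (d \is a Num.int) || (d - 1/2 \is a Num.int)].
  by case/orP: hq => /and4P[-> -> -> ->]; rewrite ?orbT.
have := (sqr_ge0 a, sqr_ge0 b, sqr_ge0 c, sqr_ge0 d) => -[[[a2 b2] c2] d2].
by do !apply: allpairs_f; apply: half_int_sqr_le1 => //; lra.
Qed.

Definition H1list : seq quat := [seq q <- quat_grid | H1 q].

Lemma H1P (q : quat) : H1 q = (q \in H1list).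
Proof. by rewrite mem_filter andb_idr //; apply: H1_in_grid. Qed.

Lemma H1list_uniq : uniq H1list.
Proof. by vm_compute. Qed.

Lemma size_H1list : size H1list = 24%N.
Proof. by vm_compute. Qed.

Definition SDlist : seq (quat * nat) := [seq (u, c) | u <- Q8list, c <- iota 0 3].

Lemma SDP (x : quat * nat) : SD x <-> x \in SDlist.
Proof.
split; first by case: x => u c [/= u8 c3]; apply: allpairs_f; rewrite ?mem_iota.
case/allpairsP => -[u c] /= [u8 c3 ->]; split => //.
by move: c3; rewrite !inE => /or3P[] /eqP ->.
Qed.

Lemma SD_mul_closed (x y : quat * nat) : SD x -> SD y -> SD (sdmul x y).
Proof.
have closed : all (fun x => all (fun y => sdmul x y \in SDlist) SDlist) SDlist.
  by vm_compute.
by move=> /SDP xS /SDP yS; apply/SDP; apply: (allP (allP closed x xS) y yS).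
Qed.

Lemma sd_quat_SDlist : perm_eq (map sd_quat SDlist) H1list.
Proof. by vm_compute. Qed.

Lemma sd_quat_iso : iso_on SD sdmul (fun q => H1 q) qmul.
Proof.
have sd_quat_inj : {in SDlist &, injective sd_quat}.
  by apply: inj_in_of_uniq_map; rewrite (perm_uniq sd_quat_SDlist) H1list_uniq.
exists sd_quat; split.
- by move=> x /SDP xS; rewrite H1P -(perm_mem sd_quat_SDlist) map_f.
- by move=> x y /SDP xS /SDP yS; apply: sd_quat_inj.
- by move=> q; rewrite H1P -(perm_mem sd_quat_SDlist) => /mapP[x /SDP xS ->]; exists x.
- by move=> x y _ _; apply: sd_quatM.
Qed.

(* [lrmx p q] is the matrix of x |-> p x q^* acting on coordinate columns. *)
Definition lrE (p q : quat) (i j : 'I_4) : rat :=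
  qcoord i (qmul (qmul p (qbasis j)) (qconj q)).
Definition lrmx (p q : quat) : 'M[rat]_4 := \matrix_(i, j) lrE p q i j.

Lemma lrmx_mul (p q p' q' : quat) :
  lrmx p q *m lrmx p' q' = lrmx (qmul p p') (qmul q q').
Proof.
apply/matrixP => i j; rewrite !mxE sum_ord4 !mxE /lrE.
move: p q p' q' => [[[? ?] ?] ?] [[[? ?] ?] ?] [[[? ?] ?] ?] [[[? ?] ?] ?].
by case: i j => [[|[|[|[|?]]]] ?] [[|[|[|[|?]]]] ?] //; quat_ring.
Qed.

Lemma lrmx1 : lrmx q1 q1 = 1%:M.
Proof.
apply/matrixP => i j; rewrite !mxE.
by case: i j => [[|[|[|[|?]]]] ?] [[|[|[|[|?]]]] ?] //; vm_compute.
Qed.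

Lemma rho_lrmx : rho = lrmx omega q1.
Proof.
apply/matrixP => i j; rewrite !mxE.
by case: i j => [[|[|[|[|?]]]] ?] [[|[|[|[|?]]]] ?] //; vm_compute.
Qed.

Lemma rho_unit : rho \in unitmx.
Proof.
have /mulmx1_unit[] // : rho *m lrmx (qconj omega) q1 = 1%:M.
by rewrite rho_lrmx lrmx_mul -lrmx1; congr lrmx; vm_compute.
Qed.

Lemma FixRhoE (x : 'M[rat]_4) : FixRho x <-> WD4 x /\ rho *m x = x *m rho.
Proof.
rewrite /FixRho; split=> -[wx E]; split=> //.
  by rewrite -{2}E mulmxKV ?rho_unit.
by rewrite E mulmxK ?rho_unit.
Qed.

Definition sd_mx (x : quat * nat) : 'M[rat]_4 := lrmx (qpow omega x.2) (sd_quat x).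

Lemma sd_mxM (x y : quat * nat) : sd_mx (sdmul x y) = sd_mx x *m sd_mx y.
Proof. by rewrite /sd_mx lrmx_mul -sd_quatM /= qpow_omega_mod3 qpowD. Qed.

Lemma rho_sd_mxC (x : quat * nat) : rho *m sd_mx x = sd_mx x *m rho.
Proof. by rewrite rho_lrmx /sd_mx !lrmx_mul qmul1q qmulq1 qpowC. Qed.

Definition signs : seq rat := [:: 1; -1].

Fixpoint sign_seqs (n : nat) : seq (seq rat) :=
  if n is n'.+1 then [seq a :: e | a <- signs, e <- sign_seqs n'] else [:: [::]].

Lemma mem_sign_seqs (n : nat) (e : seq rat) :
  (e \in sign_seqs n) = (size e == n) && all (mem signs) e.
Proof.
elim: n e => [|n IHn] [|a e] //.
  by apply/negbTE/allpairsP => -[[b f] [_ _ //]].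
rewrite [size _]/= eqSS [all _ _]/= andbCA -IHn.
apply/allpairsP/andP => [[[b f] /= [bS fS [-> ->]]] | []] //.
by exists (a, e).
Qed.

Definition spE (s : seq 'I_4) (e : seq rat) (i j : 'I_4) : rat :=
  if nth o0 s i == j then e`_i else 0.
Definition spmx (s : seq 'I_4) (e : seq rat) : 'M[rat]_4 := \matrix_(i, j) spE s e i j.

Lemma diag_perm_spmx (e : 'I_4 -> rat) (s : {perm 'I_4}) :
  diag_mx (\row_i e i) *m perm_mx s = spmx (map s ords) (map e ords).
Proof.
apply/matrixP => i j; rewrite mul_diag_mx perm_mxEsub !mxE /spE.
rewrite !(nth_map o0) ?nth_ords ?ltn_ord //.
by case: eqP; rewrite ?mulr1 ?mulr0.
Qed.

Lemma WD4_spmx (x : 'M[rat]_4) : WD4 x -> exists s e,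
  [/\ s \in permutations ords, e \in sign_seqs 4, e`_0 * e`_1 * e`_2 * e`_3 = 1
    & x = spmx s e].
Proof.
case=> e [s [e_sign e_prod ->]]; exists (map s ords), (map e ords); split.
- rewrite mem_permutations; apply: uniq_perm => [|//|i].
    by rewrite map_inj_uniq //; apply: perm_inj.
  rewrite mem_ords; apply/mapP; exists (s^-1 i)%g; rewrite ?mem_ords ?permKV //.
- rewrite mem_sign_seqs size_map eqxx; apply/allP => _ /mapP[i _ ->].
  by case: (e_sign i) => ->.
- by rewrite -e_prod prod_ord4.
- exact: diag_perm_spmx.
Qed.

Lemma spmx_WD4 (s : seq 'I_4) (e : seq rat) :
  s \in permutations ords -> e \in sign_seqs 4 -> e`_0 * e`_1 * e`_2 * e`_3 = 1 ->
  WD4 (spmx s e).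
Proof.
rewrite mem_permutations mem_sign_seqs => s_perm /andP[/eqP e_size e_sign] e_prod.
have s_size : size s = 4%N by rewrite (perm_size s_perm).
have s_inj : injective (fun i : 'I_4 => nth o0 s i).
  move=> i j /eqP; rewrite nth_uniq ?s_size // ?(perm_uniq s_perm) // => /eqP.
  exact: val_inj.
exists (fun i => e`_i), (perm s_inj); split.
- move=> i; have : e`_i \in signs by apply: (allP e_sign); rewrite mem_nth ?e_size.
  by rewrite !inE => /orP[] /eqP ->; [left | right].
- by rewrite prod_ord4.
- rewrite diag_perm_spmx (map_nth_ords 0 e_size); congr spmx.
  by rewrite (eq_map (permE s_inj)) map_nth_ords.
Qed.

(* Matrices do not reduce under [vm_compute]; decidable checks on matrices are stated on
   their list of entries. *)
Definition mxkey (F : 'I_4 -> 'I_4 -> rat) : seq rat := [seq F i j | i <- ords, j <- ords].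

Lemma nth_mxkey (F : 'I_4 -> 'I_4 -> rat) (i j : 'I_4) :
  nth 0 (mxkey F) (4 * i + j) = F i j.
Proof.
by case: i j => [[|[|[|[|?]]]] ?] [[|[|[|[|?]]]] ?] //; congr F; apply: val_inj.
Qed.

Lemma mxkey_inj (A B : 'M[rat]_4) : mxkey A = mxkey B -> A = B.
Proof. by move=> AB; apply/matrixP => i j; rewrite -!nth_mxkey AB. Qed.

Lemma mxkey_matrix (F : 'I_4 -> 'I_4 -> rat) : mxkey (\matrix_(i, j) F i j) = mxkey F.
Proof. by apply: eq_allpairs => i j; rewrite mxE. Qed.

Definition mulE4 (F G : 'I_4 -> 'I_4 -> rat) (i j : 'I_4) : rat :=
  F i o0 * G o0 j + F i o1 * G o1 j + F i o2 * G o2 j + F i o3 * G o3 j.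

Lemma mxkey_mulmx (F G : 'I_4 -> 'I_4 -> rat) :
  mxkey (\matrix_(i, j) F i j *m \matrix_(i, j) G i j) = mxkey (mulE4 F G).
Proof. by apply: eq_allpairs => i j; rewrite mxE sum_ord4 !mxE. Qed.

Definition sd_key (x : quat * nat) : seq rat := mxkey (lrE (qpow omega x.2) (sd_quat x)).

Lemma sd_mx_WD4 (x : quat * nat) : SD x -> WD4 (sd_mx x).
Proof.
have check : all (fun k => has (fun s => has (fun e =>
    (e`_0 * e`_1 * e`_2 * e`_3 == 1) && (k == mxkey (spE s e)))
  (sign_seqs 4)) (permutations ords)) (map sd_key SDlist).
  by vm_compute.
move=> /SDP /(map_f sd_key) /(allP check) /hasP[s sP /hasP[e eP]].
move=> /andP[/eqP e_prod /eqP x_key].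
have -> : sd_mx x = spmx s e by apply: mxkey_inj; rewrite !mxkey_matrix.
exact: spmx_WD4.
Qed.

Definition rhoE (i j : 'I_4) : rat := nth 0 (nth [::] rho_rows i) j / 2.

Lemma FixRho_sd_mx (x : 'M[rat]_4) : FixRho x -> exists2 y, SD y & x = sd_mx y.
Proof.
have check : let keys := map sd_key SDlist in all (fun s => all (fun e =>
    (e`_0 * e`_1 * e`_2 * e`_3 == 1)
      && (mxkey (mulE4 rhoE (spE s e)) == mxkey (mulE4 (spE s e) rhoE))
    ==> (mxkey (spE s e) \in keys))
  (sign_seqs 4)) (permutations ords).
  by vm_compute.
move=> /FixRhoE[/WD4_spmx[s [e [sP eP e_prod ->]]] comm].
have rho_rhoE : \matrix_(i, j) rhoE i j = rho by [].
move: (implyP (allP (allP check s sP) e eP)).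
rewrite e_prod eqxx -!mxkey_mulmx rho_rhoE comm eqxx => /(_ isT) /mapP[y yS y_key].
by exists y; [apply/SDP | apply: mxkey_inj; rewrite !mxkey_matrix].
Qed.

Lemma sd_mx_iso : iso_on SD sdmul FixRho mulmx.
Proof.
have sd_key_uniq : uniq (map sd_key SDlist) by vm_compute.
have sd_keyE x : sd_key x = mxkey (sd_mx x) by rewrite /sd_mx mxkey_matrix.
exists sd_mx; split.
- by move=> x xS; apply/FixRhoE; split; [apply: sd_mx_WD4 | apply: rho_sd_mxC].
- move=> x y /SDP xS /SDP yS xy.
  by apply: (inj_in_of_uniq_map sd_key_uniq xS yS); rewrite !sd_keyE xy.
- by move=> x /FixRho_sd_mx[y yS ->]; exists y.
- by move=> x y _ _; apply: sd_mxM.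
Qed.

(* Right conjugation, so that [tetra_perm] below is a homomorphism for the composition
   order [(s * t) x = t (s x)] of permutations. *)
Definition qconjby (q x : quat) : quat := qmul (qmul (qconj q) x) q.

Lemma qconjM (p q : quat) : qconj (qmul p q) = qmul (qconj q) (qconj p).
Proof. by move: p q => [[[? ?] ?] ?] [[[? ?] ?] ?]; quat_ring. Qed.

Lemma qconjbyM (p q x : quat) : qconjby (qmul p q) x = qconjby q (qconjby p x).
Proof. by rewrite /qconjby qconjM !qmulA. Qed.

Lemma qconjby_real (r : rat) (x : quat) : r ^+ 2 = 1 -> qconjby (Q r 0 0 0) x = x.
Proof.
rewrite /qconjby qmul_realC -qmulA => r2.
have -> : qmul (qconj (Q r 0 0 0)) (Q r 0 0 0) = q1.
  by rewrite qmul_conjq /qnorm /= r2; congr Q; ring.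
exact: qmulq1.
Qed.

Lemma qconjby_inj (q : quat) : qnorm q = 1 -> injective (qconjby q).
Proof.
move=> nq x y /(congr1 (qconjby (qconj q))).
by rewrite -!qconjbyM qmulq_conj nq !qconjby_real // expr1n.
Qed.

Lemma H1_mul_closed (p q : quat) : H1 p -> H1 q -> H1 (qmul p q).
Proof. exact: iso_on_mul_closed SD_mul_closed sd_quat_iso p q. Qed.

Lemma H1_qnorm (q : quat) : H1 q -> qnorm q = 1.
Proof. by case/andP=> _ /eqP. Qed.

Definition tetra : seq quat := [seq Q (1/2) (a/2) (b/2) (a * b / 2) | a <- signs, b <- signs].

Lemma tetra_nth_inj : injective (fun t : 'I_4 => nth q1 tetra t).
Proof. by move=> t u /eqP; rewrite nth_uniq // => /eqP /val_inj. Qed.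

Definition tetra_index (q : quat) (t : 'I_4) : nat := index (qconjby q (nth q1 tetra t)) tetra.

(* The identity is a junk value for the [q] whose conjugation does not permute [tetra]. *)
Definition tetra_perm (q : quat) : {perm 'I_4} :=
  insubd (1%g : {perm 'I_4}) [ffun t => inord (tetra_index q t)].

Lemma tetra_stable (q : quat) (t : 'I_4) : H1 q -> qconjby q (nth q1 tetra t) \in tetra.
Proof.
have check : all (fun q => all (fun x => qconjby q x \in tetra) tetra) H1list by vm_compute.
by rewrite H1P => /(allP check) /allP; apply; rewrite mem_nth.
Qed.

Lemma tetra_permE (q : quat) (t : 'I_4) : H1 q -> tetra_perm q t = tetra_index q t :> nat.
Proof.
move=> qH1; have index_lt u : (tetra_index q u < 4)%N by rewrite index_mem tetra_stable.
have inj : injectiveb [ffun t => inord (tetra_index q t) : 'I_4].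
  apply/injectiveP => u v; rewrite !ffunE => /(congr1 (nth q1 tetra \o val)) /=.
  rewrite !inordK // !nth_index ?tetra_stable // => /(qconjby_inj (H1_qnorm qH1)).
  exact: tetra_nth_inj.
by rewrite /tetra_perm -pvalE val_insubd inj ffunE inordK.
Qed.

Lemma tetra_perm_nth (q : quat) (t : 'I_4) :
  H1 q -> nth q1 tetra (tetra_perm q t) = qconjby q (nth q1 tetra t).
Proof. by move=> qH1; rewrite tetra_permE // nth_index ?tetra_stable. Qed.

Lemma tetra_permM (p q : quat) :
  H1 p -> H1 q -> tetra_perm (qmul p q) = (tetra_perm p * tetra_perm q)%g.
Proof.
move=> pH1 qH1; apply/permP => t; rewrite permM; apply: tetra_nth_inj => /=.
by rewrite !tetra_perm_nth ?H1_mul_closed // qconjbyM.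
Qed.

Lemma tetra_perm_real (r : rat) : r ^+ 2 = 1 -> H1 (Q r 0 0 0) -> tetra_perm (Q r 0 0 0) = 1%g.
Proof.
move=> r2 rH1; apply/permP => t; apply: tetra_nth_inj => /=.
by rewrite tetra_perm_nth // qconjby_real // perm1.
Qed.

Lemma tetra_perm_ker (q : quat) : H1 q -> tetra_perm q = 1%g -> q = q1 \/ q = qm1.
Proof.
have check : all (fun q => all (fun x => qconjby q x == x) tetra ==> (q == q1) || (q == qm1))
  H1list by vm_compute.
move=> qH1 q_ker; move: (implyP (allP check q (etrans (esym (H1P q)) qH1))).
have -> : all (fun x => qconjby q x == x) tetra.
  apply/allP => _ /(nthP q1)[t t4 <-].
  by have := tetra_perm_nth (Ordinal t4) qH1; rewrite q_ker perm1 => <-.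
by move=> /(_ isT) /orP[] /eqP ->; [left | right].
Qed.


Lemma tetra_perm_even (q : quat) : H1 q -> tetra_perm q \in ('Alt_('I_4))%g.
Proof.
have check : let squares := [seq qmul (qmul y y) (qmul z z) | y <- H1list, z <- H1list] in
  all (fun q => q \in squares) H1list by vm_compute.
rewrite H1P => /(allP check) /allpairsP[[y z] /= [yH1 zH1 ->]].
rewrite -!H1P in yH1 zH1.
have yyH1 := H1_mul_closed yH1 yH1; have zzH1 := H1_mul_closed zH1 zH1.
rewrite Alt_even (tetra_permM yyH1 zzH1) (tetra_permM yH1 yH1) (tetra_permM zH1 zH1).
by rewrite !odd_permM !addbb.
Qed.

Lemma card_Alt4 : #|('Alt_('I_4))%g| = 12%N.
Proof.
have := @card_Alt 'I_4; rewrite card_ord => /(_ isT) card2.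
have : (2 * #|('Alt_('I_4))%g| = 24)%N by rewrite card2.
lia.
Qed.

Lemma tetra_perm_surj (s : {perm 'I_4}) :
  s \in ('Alt_('I_4))%g -> exists2 q, H1 q & tetra_perm q = s.
Proof.
pose key (s : {perm 'I_4}) : seq nat := [seq (s t : nat) | t <- ords].
have key_inj : injective key.
  move=> s1 s2 /eq_in_map s12; apply/permP => t; apply: val_inj; exact: s12 (mem_ords t).
have images : size (undup [seq [seq tetra_index q t | t <- ords] | q <- H1list]) = 12%N.
  by vm_compute.
have keyE : {in H1list, key \o tetra_perm =1 fun q => [seq tetra_index q t | t <- ords]}.
  by move=> q qH1 /=; apply: eq_map => t; rewrite tetra_permE ?H1P.
have card_image : #|[set s in map tetra_perm H1list]| = 12%N.
  rewrite cardsE -(eq_card (mem_undup (map tetra_perm H1list))).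
  rewrite (card_uniqP (undup_uniq _)) -(size_map key) -(undup_map_inj key_inj).
  by move/eq_in_map: keyE; rewrite map_comp => ->; exact: images.
have image_sub : [set s in map tetra_perm H1list] \subset ('Alt_('I_4))%g.
  by apply/subsetP => s'; rewrite inE => /mapP[q qH1 ->]; apply: tetra_perm_even; rewrite H1P.
have /eqP <- : [set s in map tetra_perm H1list] == ('Alt_('I_4))%g.
  by rewrite eqEcard image_sub card_image card_Alt4.
by rewrite inE => /mapP[q qH1 ->]; exists q; rewrite ?H1P.
Qed.

Lemma H1_idem (x : quat) : H1 x -> qmul x x = x -> x = q1.
Proof.
move=> xH1 /(congr1 (qmul (qconj x))).
by rewrite qmulA qmul_conjq H1_qnorm // qmul1q.
Qed.

Lemma H1_sqrt1 (x : quat) : H1 x -> qmul x x = q1 -> x = q1 \/ x = qm1.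
Proof.
have check : all (fun x => (qmul x x == q1) ==> (x == q1) || (x == qm1)) H1list.
  by vm_compute.
rewrite H1P => /(allP check) /implyP x_sqrt /eqP /x_sqrt.
by case/orP=> /eqP ->; [left | right].
Qed.

Lemma H1_q1 : H1 q1. Proof. by vm_compute. Qed.
Lemma H1_qm1 : H1 qm1. Proof. by vm_compute. Qed.

Lemma tetra_perm_nonsplit : ~ exists sec : {perm 'I_4} -> quat,
  [/\ forall s, s \in ('Alt_('I_4))%g -> H1 (sec s),
      forall s, s \in ('Alt_('I_4))%g -> tetra_perm (sec s) = s
    & forall s t, s \in ('Alt_('I_4))%g -> t \in ('Alt_('I_4))%g ->
        sec (s * t)%g = qmul (sec s) (sec t)].
Proof.
(* The section sends the involution [tetra_perm qi] to a square root of 1, i.e. to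
   1 or -1, both of which lie in the kernel. *)
case=> sec [secH1 secK secM].
pose qi : quat := Q 0 1 0 0.
have qiH1 : H1 qi by vm_compute.
have Alt1 : (1 : {perm 'I_4})%g \in ('Alt_('I_4))%g := group1 _.
have Alt_qi := tetra_perm_even qiH1.
have sec1 : sec 1%g = q1 by apply: H1_idem (secH1 _ Alt1) _; rewrite -secM // mulg1.
have qi_sq : (tetra_perm qi * tetra_perm qi)%g = 1%g.
  rewrite -tetra_permM // (_ : qmul qi qi = qm1); last by vm_compute.
  by rewrite tetra_perm_real ?sqrrN ?expr1n ?H1_qm1.
have : qmul (sec (tetra_perm qi)) (sec (tetra_perm qi)) = q1 by rewrite -secM // qi_sq.
case/(H1_sqrt1 (secH1 _ Alt_qi)) => sec_qi.
all: have := secK _ Alt_qi.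
all: rewrite sec_qi tetra_perm_real ?expr1n ?sqrrN ?expr1n ?H1_q1 ?H1_qm1 //.
all: by move/esym/(tetra_perm_ker qiH1) => [] /(congr1 qb).
Qed.

Lemma H1_nonsplit_central_ext_A4 : nonsplit_central_ext_A4 (fun q => H1 q) qmul q1.
Proof.
have pi_q1 : tetra_perm q1 = 1%g by rewrite tetra_perm_real ?expr1n ?H1_q1.
exists tetra_perm; split.
- exact: tetra_perm_even.
- exact: tetra_permM.
- exact: tetra_perm_surj.
- split.
    exists qm1; split.
    + exact: H1_qm1.
    + by move/(congr1 qa).
    + by rewrite tetra_perm_real ?sqrrN ?expr1n ?H1_qm1.
    + exact: pi_q1.
    + exact: tetra_perm_ker.
  by move=> z x zH1 /(tetra_perm_ker zH1) [->|->] _; apply: qmul_realC.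
- exact: tetra_perm_nonsplit.
Qed.

Theorem proposition5p6 :
  [/\ iso_on FixRho mulmx (fun q => H1 q) qmul,
      (exists s : seq quat, [/\ uniq s, size s = 24%N & forall q, q \in s = H1 q]),
      iso_on (fun q => H1 q) qmul SD sdmul
    & nonsplit_central_ext_A4 (fun q => H1 q) qmul (Q 1 0 0 0)].
Proof.
split.
- exact: iso_on_trans (iso_on_sym (inhabits 0) SD_mul_closed sd_mx_iso) sd_quat_iso.
- by exists H1list; split; [exact: H1list_uniq | exact: size_H1list | move=> q; rewrite H1P].
- exact: iso_on_sym (inhabits (q1, 0%N)) SD_mul_closed sd_quat_iso.
- exact: H1_nonsplit_central_ext_A4.
Qed.
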